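(* Let $\sigma=(a_1,\ldots,a_s)$ be a partition of $r$ with $d=\gcd(a_1,\ldots,a_s)\ge2$, let $q=md+t$ with $0\le t\le d-1$, and let $H=H(n,r,q\mid\sigma)$. Let $H_m=H(n,r,md\mid\sigma)$, viewed as obtained from $H$ by deleting the top $t$ vertices of every class. Let $\sigma^*=(a_1/d,\ldots,a_s/d)$, a partition of $r/d$, and $H^*=H(n,r/d,m\mid\sigma^* )$. Then: (1) for every maximum matching $M$ of $H$ there is a matching $M^*$ of $H^*$ with $|M^*|=|M|$; (2) for every maximum matching $M^*$ of $H^*$ there is a matching $M$ of $H$ with $|M|=|M^*|$; (3) consequently $\nu(H)=\nu(H_m)=\nu(H^* )$.
   Context: A $\sigma$-hypergraph $H=H(n,r,q\mid\sigma)$, for a partition $\sigma$ of $r$, is the $r$-uniform hypergraph whose vertex set is the disjoint union of $n$ classes $V_1,\ldots,V_n$, each of size $q$; an $r$-subset $K$ of vertices is an edge iff the multiset of non-zero values $|K\cap V_i|$ equals $\sigma$. The vertices of each class are ordered $v_{1,i},\ldots,v_{q,i}$, and the top $t$ vertices of $V_i$ are $v_{1,i},\ldots,v_{t,i}$. A matching is a set of pairwise vertex-disjoint edges; $\nu(\cdot)$ denotes the maximum size of a matching. *)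

From mathcomp Require Import all_boot.
Set Implicit Arguments. Unset Strict Implicit. Unset Printing Implicit Defensive.

(* Vertices of H(n,r,q|sigma): pairs (i, j) meaning v_{j+1,i}, the (j+1)-th
   vertex of class V_i (0-indexed: class i : 'I_n, position j : 'I_q). *)
Definition vtx (n q : nat) := ('I_n * 'I_q)%type.

Definition class_count (n q : nat) (K : {set vtx n q}) (i : 'I_n) : nat :=
  #|[set v in K | v.1 == i]|.

Definition profile (n q : nat) (K : {set vtx n q}) : seq nat :=
  [seq c <- [seq class_count K i | i <- enum 'I_n] | c != 0].

Definition is_partition (sigma : seq nat) (r : nat) : Prop :=
  all (fun a => 0 < a) sigma /\ sumn sigma = r.

Definition sigma_hg (n r q : nat) (sigma : seq nat) : {set {set vtx n q}} :=
  [set K : {set vtx n q} | (#|K| == r) && perm_eq (profile K) sigma].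

Definition is_matching (T : finType) (E M : {set {set T}}) : Prop :=
  M \subset E /\
  (forall e f, e \in M -> f \in M -> e != f -> [disjoint e & f]).

Definition is_matchingb (T : finType) (E M : {set {set T}}) : bool :=
  (M \subset E) &&
  [forall e in M, forall f in M, (e != f) ==> [disjoint e & f]].

Definition nu (T : finType) (E : {set {set T}}) : nat :=
  \max_(M : {set {set T}} | is_matchingb E M) #|M|.

Definition is_max_matching (T : finType) (E M : {set {set T}}) : Prop :=
  is_matching E M /\ #|M| = nu E.

Definition gcd_seq (s : seq nat) : nat := \big[gcdn/0]_(a <- s) a.

From mathcomp Require Import all_boot.
Set Implicit Arguments. Unset Strict Implicit. Unset Printing Implicit Defensive.

(* Every part of sigma is a multiple of d, so an edge of H meets each class
   in a multiple of d vertices.  Dividing these class counts by d turns a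
   matching of H into a family of count vectors whose sums over the matching
   are at most floor(q/d) = m in every class; multiplying the counts of a
   matching of H^* by d gives column sums at most md <= q.  Any family of count
   vectors with column sums bounded by the class size is realized by pairwise
   disjoint vertex sets, stacking consecutive blocks in every class, and the
   realized sets are edges of the target hypergraph because its profile is the
   image of the original one.  The case q = md gives the same value for H_m. *)

Section Matchings.
Variable T : finType.
Implicit Types E M : {set {set T}}.

Lemma is_matchingP E M : reflect (is_matching E M) (is_matchingb E M).
Proof.
apply: (iffP andP) => [[sME /forallP disjM]|[sME disjM]]; split => //.
  move=> e f eM fM ef.
  by have /forall_inP/(_ f fM)/implyP := implyP (disjM e) eM; apply.
by apply/forall_inP => e eM; apply/forall_inP => f fM; apply/implyP; apply: disjM.
Qed.

Lemma matching_trivIset E M : is_matching E M -> trivIset M.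
Proof. by case=> _ disjM; apply/trivIsetP. Qed.

End Matchings.

Lemma leq_nu (T T' : finType) (E : {set {set T}}) (E' : {set {set T'}}) :
  (forall M, is_matching E M -> exists M', is_matching E' M' /\ #|M'| = #|M|) ->
  nu E <= nu E'.
Proof.
move=> transfer; apply/bigmax_leqP => M /= /is_matchingP /transfer [M' [M'm <-]].
by apply: leq_bigmax_cond; apply/is_matchingP.
Qed.

Section ClassCounts.
Variables n q : nat.
Implicit Types K : {set vtx n q}.

Lemma class_countE K i : class_count K i = \sum_(v in K | v.1 == i) 1.
Proof. by rewrite /class_count -sum1_card; apply: eq_bigl => v; rewrite inE. Qed.

Lemma card_class_counts K : #|K| = \sum_(i < n) class_count K i.
Proof.
rewrite -sum1_card (partition_big (fun v : vtx n q => v.1) predT) //=.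
by apply: eq_bigr => i _; rewrite class_countE.
Qed.

Lemma class_count_cover (P : {set {set vtx n q}}) i : trivIset P ->
  class_count (cover P) i = \sum_(K in P) class_count K i.
Proof.
move=> tiP; rewrite class_countE big_trivIset_cond //.
by apply: eq_bigr => K _; rewrite class_countE.
Qed.

Lemma class_count_le K i : class_count K i <= q.
Proof.
rewrite /class_count -(@card_in_imset _ _ snd).
  by apply: leq_trans (max_card _) _; rewrite card_ord.
by move=> [i1 j1] [i2 j2]; rewrite !inE => /andP[_ /eqP/= ->] /andP[_ /eqP/= ->] /= ->.
Qed.

Lemma card_profile K : #|K| = sumn (profile K).
Proof.
rewrite sumnE big_filter big_map big_rmcond => [|i /negPn/eqP //].
by rewrite big_enum card_class_counts.
Qed.

Lemma mem_sigma_hg r s K : r = sumn s -> (K \in sigma_hg n r q s) = perm_eq (profile K) s.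
Proof.
move=> ->; rewrite inE card_profile andb_idl // => /perm_sumn ->.
by rewrite eqxx.
Qed.

Lemma sigma_hg_neq0 r s K : 0 < r -> K \in sigma_hg n r q s -> K != set0.
Proof.
move=> r_gt0; rewrite inE => /andP[/eqP cardK _].
by apply: contraTneq r_gt0 => K0; rewrite -cardK K0 cards0.
Qed.

Lemma card_ord_interval a b : b <= q -> #|[set j : 'I_q | a <= j < b]| = b - a.
Proof.
move=> bq; rewrite cardsE -sum1_card -(big_mkord (fun j => a <= j < b) (fun _ => 1)).
transitivity (\sum_(a <= j < b) 1); last by rewrite sum_nat_const_nat muln1.
by rewrite (big_nat_widenl a 0 b) // (big_nat_widen 0 b q).
Qed.

Definition class_block (o c : 'I_n -> nat) : {set vtx n q} :=
  [set v : vtx n q | o v.1 <= v.2 < o v.1 + c v.1].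

Lemma class_count_block o c i : o i + c i <= q ->
  class_count (class_block o c) i = c i.
Proof.
move=> fits; rewrite /class_count.
have -> : [set v in class_block o c | v.1 == i] = pair i @: [set j : 'I_q | o i <= j < o i + c i].
  apply/setP => -[i' j]; rewrite !inE /=; apply/andP/imsetP => [[jB /eqP ii']|[j' + [-> ->]]].
    by subst i'; exists j; rewrite ?inE.
  by rewrite inE eqxx.
by rewrite card_imset ?card_ord_interval ?addKn // => j j' [].
Qed.

Lemma disjoint_class_block o c (K : {set vtx n q}) :
  (forall v, v \in K -> o v.1 + c v.1 <= v.2) -> [disjoint class_block o c & K].
Proof.
move=> aboveK; rewrite disjoints_subset; apply/subsetP => v.
by rewrite !inE => /andP[_ lt_v]; apply/negP => /aboveK; rewrite leqNgt lt_v.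
Qed.

Lemma realize_class_counts (X : eqType) (c : X -> 'I_n -> nat) (s : seq X)
    (o : 'I_n -> nat) :
  uniq s -> (forall i, o i + \sum_(x <- s) c x i <= q) ->
  exists K : X -> {set vtx n q},
  [/\ {in s, forall x i, class_count (K x) i = c x i},
      {in s &, forall x y, x != y -> [disjoint K x & K y]} &
      {in s, forall x v, v \in K x -> o v.1 <= v.2}].
Proof.
elim: s o => [|x s IHs] o /=; first by exists (fun _ => set0).
case/andP=> x_s uniq_s fits.
have [|K [countK disjK aboveK]] := IHs (fun i => o i + c x i) uniq_s.
  by move=> i; rewrite -addnA; have := fits i; rewrite big_cons.
have disj_x y : y \in s -> [disjoint class_block o (c x) & K y].
  by move=> y_s; apply: disjoint_class_block => v; apply: aboveK.
exists (fun y => if y == x then class_block o (c x) else K y); split.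
- move=> y; rewrite inE; case: eqP => [-> _ i|_ /= y_s]; last exact: countK.
  by apply: class_count_block; apply: leq_trans (fits i); rewrite big_cons addnA leq_addr.
- move=> y z; rewrite !inE.
  case: (eqVneq y x) => [->|yx]; case: (eqVneq z x) => [->|zx] //= y_s z_s yz.
  + exact: disj_x.
  + by rewrite disjoint_sym; apply: disj_x.
  + exact: disjK.
- move=> y; rewrite inE; case: eqP => [_ _ v|_ /= y_s v /(aboveK _ y_s)].
    by rewrite inE => /andP[].
  exact/leq_trans/leq_addr.
Qed.

End ClassCounts.

Lemma sigma_hg_map n q q' (f : nat -> nat) s (e : {set vtx n q}) (K : {set vtx n q'}) :
  f 0 = 0 -> {in s, forall a, f a != 0} -> e \in sigma_hg n (sumn s) q s ->
  (forall i, class_count K i = f (class_count e i)) ->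
  K \in sigma_hg n (sumn (map f s)) q' (map f s).
Proof.
move=> f0 f_s; rewrite !mem_sigma_hg // => profile_e countK.
suff -> : profile K = map f (profile e) by apply: perm_map.
rewrite /profile (eq_map countK) map_comp filter_map; congr map.
apply: eq_in_filter => x x_e /=; have [-> | x0] := eqVneq x 0; first by rewrite f0.
by apply: f_s; rewrite -(perm_mem profile_e) mem_filter x0.
Qed.

Lemma sum_class_count_matching n q E (M : {set {set vtx n q}}) i :
  is_matching E M -> \sum_(e in M) class_count e i <= q.
Proof. by move/matching_trivIset/class_count_cover <-; apply: class_count_le. Qed.

Lemma matching_sigma_hg_map n q q' (f : nat -> nat) s (M : {set {set vtx n q}}) :
  s != [::] -> f 0 = 0 -> {in s, forall a, f a != 0} ->
  is_matching (sigma_hg n (sumn s) q s) M ->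
  (forall i, \sum_(e in M) f (class_count e i) <= q') ->
  exists M', is_matching (sigma_hg n (sumn (map f s)) q' (map f s)) M' /\ #|M'| = #|M|.
Proof.
move=> s_nil f0 f_s [sME disjM] fits.
have image_pos : 0 < sumn (map f s).
  by case: s s_nil f_s sME => // a s' _ f_s _; rewrite /= addn_gt0 lt0n f_s ?mem_head.
have [|K [countK disjK _]] := @realize_class_counts n q' _ (fun e i => f (class_count e i))
  (enum M) (fun _ => 0) (enum_uniq _).
  by move=> i; rewrite add0n big_enum fits.
have edgeK e : e \in M -> K e \in sigma_hg n (sumn (map f s)) q' (map f s).
  by move=> eM; apply: sigma_hg_map (subsetP sME e eM) _ => //; apply: countK; rewrite mem_enum.
have K_neq0 e : e \in M -> K e != set0.
  by move=> /edgeK; apply: sigma_hg_neq0 image_pos.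
have disjKM : {in M &, forall e e', e != e' -> [disjoint K e & K e']}.
  by move=> e e' eM e'M; apply: disjK; rewrite mem_enum.
exists (K @: M); split; last first.
  rewrite card_in_imset // => e e' eM e'M Kee'; apply: contraTeq (K_neq0 e eM) => ee'.
  by rewrite negbK -[K e]setIid {2}Kee' setI_eq0 disjKM.
split; first by apply/subsetP => _ /imsetP[e eM ->]; apply: edgeK.
move=> _ _ /imsetP[e eM ->] /imsetP[e' e'M ->] Kee'.
by apply: disjKM => //; apply: contraNneq Kee' => ->.
Qed.

Lemma dvdn_gcd_seq s a : a \in s -> gcd_seq s %| a.
Proof. by move=> a_s; rewrite /gcd_seq (big_rem a) //= dvdn_gcdl. Qed.

Section Quotient.
Variables (n d : nat) (s : seq nat).
Hypotheses (s_nil : s != [::]) (s_pos : {in s, forall a, 0 < a}).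
Hypotheses (d_pos : 0 < d) (d_dvd : {in s, forall a, d %| a}).

Lemma map_divnK : [seq a * d | a <- [seq a %/ d | a <- s]] = s.
Proof. by rewrite -map_comp -[RHS]map_id; apply/eq_in_map => a /d_dvd /divnK. Qed.

Lemma sumn_divn : sumn [seq a %/ d | a <- s] = sumn s %/ d.
Proof.
by rewrite -[in RHS]map_divnK [in RHS]sumnE big_map -big_distrl /= -sumnE mulnK.
Qed.

Lemma divn_parts_gt0 : {in s, forall a, 0 < a %/ d}.
Proof. by move=> a a_s; rewrite divn_gt0 // dvdn_leq ?s_pos ?d_dvd. Qed.

Lemma matching_sigma_hg_divn q (M : {set {set vtx n q}}) :
  is_matching (sigma_hg n (sumn s) q s) M ->
  exists M', is_matching (sigma_hg n (sumn s %/ d) (q %/ d) [seq a %/ d | a <- s]) M'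
             /\ #|M'| = #|M|.
Proof.
move=> Mm; rewrite -sumn_divn; apply: (@matching_sigma_hg_map n q (q %/ d) (divn^~ d) s M) => //.
- exact: div0n.
- by move=> a /divn_parts_gt0; rewrite lt0n.
- move=> i; rewrite leq_divRL // big_distrl /=.
  apply: leq_trans (sum_class_count_matching i Mm).
  by apply: leq_sum => e _; apply: leq_divM.
Qed.

Lemma matching_sigma_hg_muln q m (M : {set {set vtx n m}}) : m * d <= q ->
  is_matching (sigma_hg n (sumn s %/ d) m [seq a %/ d | a <- s]) M ->
  exists M', is_matching (sigma_hg n (sumn s) q s) M' /\ #|M'| = #|M|.
Proof.
rewrite -sumn_divn => mdq Mm.
have := @matching_sigma_hg_map n m q (muln^~ d) [seq a %/ d | a <- s] M.
rewrite map_divnK; apply => //.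
- by case: s s_nil.
- by move=> _ /mapP[a /divn_parts_gt0 a_gt0 ->]; rewrite muln_eq0 negb_or -!lt0n a_gt0.
- move=> i; rewrite -big_distrl /=; apply: leq_trans mdq.
  by rewrite leq_mul2r (sum_class_count_matching i Mm) orbT.
Qed.

End Quotient.

Theorem lemma3p5 (n r q m t d : nat) (sigma : seq nat) :
  is_partition sigma r ->
  d = gcd_seq sigma -> 2 <= d ->
  q = m * d + t -> t <= d - 1 ->
  let H := sigma_hg n r q sigma in
  let Hm := sigma_hg n r (m * d) sigma in
  let Hs := sigma_hg n (r %/ d) m [seq a %/ d | a <- sigma] in
  (forall M, is_max_matching H M ->
     exists Ms, is_matching Hs Ms /\ #|Ms| = #|M|) /\
  (forall Ms, is_max_matching Hs Ms ->
     exists M, is_matching H M /\ #|M| = #|Ms|) /\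
  (nu H = nu Hm /\ nu Hm = nu Hs).
Proof.
move=> [/allP s_pos <-] d_gcd d_ge2 q_def t_lt H Hm Hs.
have d_pos : 0 < d by apply: leq_trans d_ge2.
have s_nil : sigma != [::] by apply: contraTneq d_ge2 => s0; rewrite d_gcd s0 /gcd_seq big_nil.
have d_dvd : {in sigma, forall a, d %| a} by move=> a; rewrite d_gcd; apply: dvdn_gcd_seq.
have q_div : q %/ d = m.
  by rewrite q_def divnMDl // divn_small ?addn0 // (leq_ltn_trans t_lt) // ltn_subrL d_pos.
have to_Hs := matching_sigma_hg_divn s_nil s_pos d_pos d_dvd.
have from_Hs := matching_sigma_hg_muln s_nil s_pos d_pos d_dvd.
have nu_Hs q' : m * d <= q' -> q' %/ d = m -> nu (sigma_hg n (sumn sigma) q' sigma) = nu Hs.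
  move=> mdq qd; apply/eqP; rewrite eqn_leq; apply/andP; split; apply: leq_nu => M Mm.
    by rewrite /Hs -qd; apply: to_Hs.
  exact: from_Hs.
have nu_H : nu H = nu Hs by apply: nu_Hs; rewrite // q_def leq_addr.
have nu_Hm : nu Hm = nu Hs by apply: nu_Hs; rewrite ?mulnK.
split; [|split].
- by move=> M [Mm _]; rewrite /Hs -q_div; apply: to_Hs.
- by move=> M [Mm _]; apply: from_Hs _ Mm; rewrite q_def leq_addr.
- by rewrite nu_H nu_Hm.
Qed.
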